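(* Let $(\tau,\ell)$ have law $\rho_0$ and let $\Delta_0=\max\{\ell(v):v\in\tau\}$. Then, as $m\to\infty$, $$\mathbb P(\Delta_0\ge m)\sim\frac{2}{m^2},$$ meaning that the ratio of the two sides tends to 1.
   Context: $\rho_0$ is the law of a Galton–Watson plane tree with offspring law $P(k)=2^{-k-1}$, $k\ge0$, in which the root has label 0 and every other vertex gets its parent's label plus an independent uniform element of $\{-1,0,1\}$. *)

From HB Require Import structures.
From mathcomp Require Import all_boot all_order all_algebra.
From mathcomp Require Import all_classical all_reals all_analysis.
Set Implicit Arguments. Unset Strict Implicit. Unset Printing Implicit Defensive.
Import Order.TTheory GRing.Theory Num.Theory.
Local Open Scope ring_scope.

Inductive ltree : Type := LNode : int -> seq ltree -> ltree.

HB.instance Definition _ := gen_eqMixin ltree.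
HB.instance Definition _ := gen_choiceMixin ltree.

Definition label (t : ltree) : int := let: LNode l _ := t in l.

Fixpoint valid_labels (t : ltree) : bool :=
  let: LNode l cs := t in
  (fix vl (cs : seq ltree) : bool :=
     match cs with
     | [::] => true
     | c :: cs' => [&& (`|label c - l| <= 1)%R, valid_labels c & vl cs']
     end) cs.

Fixpoint max_label (t : ltree) : int :=
  let: LNode l cs := t in
  (fix ml (cs : seq ltree) : int :=
     match cs with
     | [::] => l
     | c :: cs' => Num.max (max_label c) (ml cs')
     end) cs.

(* Probability under rho_0 of a given (finite) labeled tree:
   each vertex with k children contributes the offspring probability
   2^{-k-1}, and each of its k children contributes the probability 1/3 of
   its label increment. *)
Fixpoint rho0_weight (R : realType) (t : ltree) : R :=
  let: LNode _ cs := t in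
  (2 ^+ (size cs).+1)^-1 * (3 ^+ size cs)^-1 *
  (fix wl (cs : seq ltree) : R :=
     match cs with
     | [::] => 1
     | c :: cs' => rho0_weight R c * wl cs'
     end) cs.

Definition rho0_support : set ltree :=
  [set t | label t = 0 /\ valid_labels t].

Definition prob_Delta0_ge (R : realType) (m : nat) : \bar R :=
  \esum_(t in [set t | rho0_support t /\ (m%:Z <= max_label t)%R])
     (rho0_weight R t)%:E.

From HB Require Import structures.
From mathcomp Require Import all_boot all_order all_algebra.
From mathcomp Require Import all_classical all_reals all_analysis.
From mathcomp Require Import zify ring lra.
Import Order.TTheory GRing.Theory Num.Theory.
Import numFieldNormedType.Exports.
Local Open Scope classical_set_scope.
Local Open Scope ring_scope.
Set Implicit Arguments. Unset Strict Implicit. Unset Printing Implicit Defensive.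

(* Let [u(l)] be the probability that a tree rooted at label [l] has all its
   labels below [j].  The offspring generating function is [1 / (2 - s)] and a
   child's label is uniform on [l - 1, l, l + 1], so [u(l) = 0] for [l >= j] and
   [u(l) = 1 / (2 - (u(l - 1) + u(l) + u(l + 1)) / 3)] for [l < j].  This is
   solved by [u(l) = 1 - 2 / ((j - l + 1) (j - l + 2))], hence P(Delta_0 >= m)
   equals [2 / ((m + 1) (m + 2))] exactly.  Rigorously: the weights of the
   finitely many trees of height [<= n] and degrees [<= K] satisfy a truncated
   form of the recursion, which propagates the bounds [1 - u] on the weight of
   the trees reaching [j] and [u] on the weight of the others; since the total
   weight of these trees tends to [1] as [n] and [K] grow, the two bounds pinch
   the probability. *)

Lemma ltree_ind_mem (P : ltree -> Prop) :
  (forall l cs, (forall c, c \in cs -> P c) -> P (LNode l cs)) -> forall t, P t.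
Proof.
move=> IH; fix F 1 => -[l cs]; apply: IH.
(* [F] is cleared so that [done] cannot close the goal by an unguarded call. *)
elim: cs => [|c0 cs IHcs] c; first by clear F; rewrite in_nil.
rewrite inE => /predU1P [-> | /IHcs]; [exact: F | exact].
Qed.

Fixpoint tree_size (t : ltree) : nat :=
  let: LNode _ cs := t in (sumn (map tree_size cs)).+1.

Lemma tree_size_child l cs c : c \in cs -> (tree_size c < tree_size (LNode l cs))%N.
Proof.
move=> /= cin; rewrite ltnS; elim: cs cin => // c' cs IH.
by rewrite inE /= => /predU1P [-> | /IH]; lia.
Qed.

Lemma size_le_tree_size l cs : (size cs < tree_size (LNode l cs))%N.
Proof.
rewrite /= ltnS; elim: cs => //= -[? ?] cs IH.
by rewrite addSn ltnS (leq_trans IH) // leq_addl.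
Qed.

Lemma valid_labels_node l cs : valid_labels (LNode l cs) =
  all (fun c => (`|label c - l| <= 1) && valid_labels c) cs.
Proof. by elim: cs => //= c cs ->; rewrite andbA. Qed.

Lemma max_label_node_lt l cs (j : int) : (max_label (LNode l cs) < j) =
  (l < j) && all (fun c => max_label c < j) cs.
Proof.
elim: cs => [|c cs IH] /=; first by rewrite andbT.
by rewrite gt_max IH andbCA.
Qed.

Fixpoint all_seqs (T : Type) (s : seq T) (k : nat) : seq (seq T) :=
  if k is k'.+1 then [seq c :: cs | c <- s, cs <- all_seqs s k'] else [:: [::]].

Lemma mem_all_seqs (T : eqType) (s : seq T) k cs :
  (cs \in all_seqs s k) = (size cs == k) && all (mem s) cs.
Proof.
elim: k cs => [|k IH] cs /=; first by case: cs.
apply/allpairsP/idP => [[[c' cs'] /= [c's + ->]] | ].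
  by rewrite IH /= eqSS c's.
case: cs => // c cs /andP [/= csk /andP [cin csin]].
by exists (c, cs); rewrite IH -eqSS csk.
Qed.

Lemma all_seqs_uniq (T : eqType) (s : seq T) k : uniq s -> uniq (all_seqs s k).
Proof.
move=> us; elim: k => //= k IH.
by apply: allpairs_uniq => // -[a b] [c d] _ _ /= [-> ->].
Qed.

Fixpoint bounded_trees (K n : nat) (l : int) : seq ltree :=
  if n is n'.+1 then
    [seq LNode l cs | k <- iota 0 K.+1,
       cs <- all_seqs (bounded_trees K n' (l - 1) ++ bounded_trees K n' l
                       ++ bounded_trees K n' (l + 1)) k]
  else [:: LNode l [::]].

Lemma bounded_treesS K n l : bounded_trees K n.+1 l =
  [seq LNode l cs | k <- iota 0 K.+1,
     cs <- all_seqs (bounded_trees K n (l - 1) ++ bounded_trees K n l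
                     ++ bounded_trees K n (l + 1)) k].
Proof. by []. Qed.

Lemma mem_bounded_trees K n l t :
  t \in bounded_trees K n l -> label t = l /\ valid_labels t.
Proof.
elim: n l t => [|n IH] l t; first by rewrite inE => /eqP ->.
rewrite bounded_treesS => /allpairsPdep [k [cs [_ + ->]]].
rewrite mem_all_seqs => /andP [_ /allP csin].
split => //; rewrite valid_labels_node; apply/allP => c /csin.
by rewrite /= !mem_cat => /or3P [] /IH [-> ->]; rewrite andbT; lia.
Qed.

Lemma bounded_trees_complete K n t : valid_labels t ->
  (tree_size t <= n.+1)%N -> (n <= K)%N -> t \in bounded_trees K n (label t).
Proof.
elim: n t => [|n IH] [l cs] valid szt nK.
  by case: cs szt {valid} => [|[? ?] ?]; rewrite ?inE.
rewrite bounded_treesS; apply/allpairsPdep; exists (size cs), cs; split => //.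
  by rewrite mem_iota; have := size_le_tree_size l cs; lia.
rewrite mem_all_seqs eqxx; apply/allP => c cin.
move: valid; rewrite valid_labels_node => /allP /(_ c cin) /andP [lc vc].
have szc : (tree_size c <= n.+1)%N by have := tree_size_child l cin; lia.
have := IH c vc szc (ltnW nK); rewrite /= !mem_cat.
have : label c \in [:: l - 1; l; l + 1] by rewrite !inE; lia.
by rewrite !inE => /or3P [] /eqP <- ->; rewrite ?orbT.
Qed.

Lemma bounded_trees_uniq K n l : uniq (bounded_trees K n l).
Proof.
elim: n l => [|n IH] l //.
rewrite bounded_treesS; apply: allpairs_uniq_dep; first exact: iota_uniq.
  move=> k _; apply: all_seqs_uniq.
  have lab l' t : t \in bounded_trees K n l' -> label t = l'.
    by case/mem_bounded_trees.
  rewrite !cat_uniq !IH /= andbT; apply/andP; split.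
    apply/hasPn => t; rewrite mem_cat => /orP [] /lab ht1;
      apply/negP => /lab; lia.
  by apply/hasPn => t /lab ht1; apply/negP => /lab; lia.
set S := [seq Tagged _ _ | _ <- _, _ <- _].
have tag_size p : p \in S -> projT1 p = size (projT2 p).
  by case/allpairsPdep => x [y [_ + ->]]; rewrite mem_all_seqs => /andP [/eqP ->].
by move=> [k1 cs1] [k2 cs2] /tag_size /= -> /tag_size /= -> [->].
Qed.

Section GeomPgf.
Variable R : realFieldType.
Implicit Types x y d : R.

Definition geom_pgf N x := \sum_(k <- iota 0 N) (2 ^+ k.+1)^-1 * x ^+ k.

Lemma geom_pgfE N x : x != 2 -> geom_pgf N x = (1 - (x / 2) ^+ N) / (2 - x).
Proof.
move=> x2; have x2' : 2 - x != 0 by rewrite subr_eq0 eq_sym.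
apply: (mulIf x2'); rewrite divfK //; elim: N => [|N IH].
  by rewrite /geom_pgf big_nil mul0r expr0 subrr.
rewrite /geom_pgf -addn1 iotaD big_cat /= big_seq1 add0n mulrDl -/(geom_pgf N x) IH.
have h2 : (2 : R) ^+ N != 0 by rewrite expf_neq0 // pnatr_eq0.
by rewrite addn1 !exprMn !exprVn !exprS; field.
Qed.

Lemma geom_pgf_ge0 N x : 0 <= x -> 0 <= geom_pgf N x.
Proof.
by move=> x0; apply: sumr_ge0 => k _; rewrite mulr_ge0 ?invr_ge0 ?exprn_ge0.
Qed.

Lemma ler_geom_pgf N x y : 0 <= x -> x <= y -> geom_pgf N x <= geom_pgf N y.
Proof.
move=> x0 xy; apply: ler_sum => k _; rewrite ler_wpM2l ?invr_ge0 ?exprn_ge0 //.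
by rewrite lerXn2r // nnegrE (le_trans x0).
Qed.

Lemma geom_pgf_le N x : 0 <= x -> x <= 1 -> geom_pgf N x <= (2 - x)^-1.
Proof.
move=> x0 x1; rewrite geom_pgfE; last by apply/eqP; lra.
rewrite ler_pdivrMr; last lra.
rewrite mulVf; last by apply/eqP; lra.
by rewrite gerBl exprn_ge0 // divr_ge0.
Qed.

Lemma geom_pgf_ge N x : 0 <= x -> x <= 1 -> (2 - x)^-1 - (2 ^+ N)^-1 <= geom_pgf N x.
Proof.
move=> x0 x1; rewrite geom_pgfE; last by apply/eqP; lra.
rewrite mulrBl div1r lerB // -exprVn.
have hx : 0 <= (x / 2) ^+ N by rewrite exprn_ge0 // divr_ge0.
apply: (le_trans (y := (x / 2) ^+ N)).
  by rewrite ler_pdivrMr ?ler_peMr //; lra.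
by rewrite lerXn2r // ?nnegrE ?divr_ge0 ?invr_ge0 //; lra.
Qed.

Lemma sub_exprn_le k x y d : 0 <= y -> y <= x -> x <= 1 -> x - y <= d -> d <= 1 ->
  x ^+ k - y ^+ k <= 1 - (1 - d) ^+ k.
Proof.
move=> y0 yx x1 xyd d1.
apply: (le_trans (y := 1 - (1 - (x - y)) ^+ k)); last first.
  by rewrite lerB // lerXn2r // ?nnegrE; lra.
rewrite -[X in _ <= X - _](expr1n _ k) !subrXX.
have -> : 1 - (1 - (x - y)) = x - y by ring.
rewrite ler_wpM2l //; first lra.
apply: ler_sum => i _; rewrite expr1n mul1r.
rewrite -[X in _ <= X]mul1r ler_pM ?exprn_ge0 //; try lra.
  by rewrite exprn_ile1 //; lra.
by rewrite lerXn2r // ?nnegrE; lra.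
Qed.

(* Monomials are convex on [0, 1], so their increment over an interval of
   length [d] is largest on [1 - d, 1]. *)
Lemma geom_pgf_sub_le N x y d : 0 <= y -> y <= x -> x <= 1 -> x - y <= d -> d <= 1 ->
  geom_pgf N x - geom_pgf N y <= 1 - (1 + d)^-1.
Proof.
move=> y0 yx x1 xyd d1; have d0 : 0 <= d by lra.
apply: (le_trans (y := geom_pgf N 1 - geom_pgf N (1 - d))).
  rewrite /geom_pgf -!sumrB; apply: ler_sum => k _; rewrite -!mulrBr ler_wpM2l //.
  by rewrite expr1n; apply: sub_exprn_le.
have -> : geom_pgf N 1 = 1 - (2^-1) ^+ N.
  rewrite geom_pgfE ?div1r; last by apply/eqP; lra.
  have -> : (2 : R) - 1 = 1 by lra.
  by rewrite divr1.
have d0' : 0 <= 1 - d by lra.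
have d1' : 1 - d <= 1 by lra.
have := geom_pgf_ge N d0' d1'; rewrite -exprVn.
have -> : 2 - (1 - d) = 1 + d by ring.
have : 0 <= (2 ^-1) ^+ N :> R by rewrite exprn_ge0 // invr_ge0.
lra.
Qed.

Lemma inv_2B_lipschitz x y e : 0 <= e -> y <= 1 -> x <= 1 -> y - e <= x ->
  (2 - y)^-1 - e <= (2 - x)^-1.
Proof.
move=> e0 y1 x1 yex.
apply: (le_trans (y := (2 - y + e)^-1)); last by rewrite lef_pV2 ?posrE; lra.
have -> : (2 - y)^-1 - e = (2 - y + e)^-1 + (e / ((2 - y) * (2 - y + e)) - e).
  by field; rewrite ![_ != 0]lt0r_neq0 //; lra.
rewrite gerDl subr_le0 ler_pdivrMr ?mulr_gt0 //; try lra.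
by rewrite ler_peMr //; nra.
Qed.

End GeomPgf.

Section Mean3.
Variable R : numFieldType.
Implicit Types f g : int -> R.

Definition mean3 f (l : int) := (f (l - 1) + f l + f (l + 1)) / 3.

Lemma mean3_cst (c : R) l : mean3 (fun=> c) l = c.
Proof. by rewrite /mean3; field. Qed.

Lemma mean3B f g l : mean3 f l - mean3 g l = mean3 (fun i => f i - g i) l.
Proof. by rewrite /mean3 -mulrBl; congr (_ / _); rewrite !opprD !addrA; ring. Qed.

Lemma ler_mean3 f g l : (forall i, f i <= g i) -> mean3 f l <= mean3 g l.
Proof. by move=> fg; rewrite ler_pM2r ?invr_gt0 ?ltr0n // !lerD. Qed.

Lemma mean3_ge f c l : (forall i, c <= f i) -> c <= mean3 f l.
Proof. by move=> cf; rewrite -(mean3_cst c l) ler_mean3. Qed.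

Lemma mean3_le f c l : (forall i, f i <= c) -> mean3 f l <= c.
Proof. by move=> fc; rewrite -(mean3_cst c l) ler_mean3. Qed.

End Mean3.

Lemma big_all_seqs (R : pzSemiRingType) (T : Type) (h : T -> R) s k :
  \sum_(cs <- all_seqs s k) \prod_(c <- cs) h c = (\sum_(c <- s) h c) ^+ k.
Proof.
elim: k => [|k IH] /=; first by rewrite big_seq1 big_nil expr0.
rewrite big_allpairs_dep exprS big_distrl /=; apply: eq_bigr => c _.
by rewrite -IH big_distrr /=; apply: eq_bigr => cs _; rewrite big_cons.
Qed.

Section Rho0Sums.
Variable R : realType.
Local Notation w := (rho0_weight R).

Lemma rho0_weightE l cs : w (LNode l cs) =
  (2 ^+ (size cs).+1)^-1 * (3 ^+ size cs)^-1 * \prod_(c <- cs) w c.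
Proof.
by rewrite /=; congr (_ * _); elim: cs => [|c cs IH] /=; rewrite ?big_nil ?big_cons ?IH.
Qed.

Lemma rho0_weight_ge0 t : 0 <= w t.
Proof.
elim/ltree_ind_mem: t => l cs IH; rewrite rho0_weightE !mulr_ge0 ?invr_ge0 ?exprn_ge0 //.
by rewrite big_seq prodr_ge0.
Qed.

Lemma sum_bounded_treesS (h : ltree -> R) c0 K n l :
  (forall cs, h (LNode l cs) =
     c0 * ((2 ^+ (size cs).+1)^-1 * (3 ^+ size cs)^-1 * \prod_(c <- cs) h c)) ->
  \sum_(t <- bounded_trees K n.+1 l) h t =
  c0 * geom_pgf K.+1 (mean3 (fun i => \sum_(c <- bounded_trees K n i) h c) l).
Proof.
move=> hE; rewrite bounded_treesS big_allpairs_dep /geom_pgf /mean3 mulr_sumr.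
apply: eq_bigr => k _; rewrite big_seq (eq_bigr (fun cs => c0 *
  ((2 ^+ k.+1)^-1 * (3 ^+ k)^-1 * \prod_(c <- cs) h c))); last first.
  by move=> cs; rewrite mem_all_seqs => /andP [/eqP <- _]; rewrite hE.
rewrite -big_seq -!mulr_sumr big_all_seqs !big_cat /= exprMn exprVn addrA.
by congr (_ * _); ring.
Qed.

Variable K : nat.

Definition mass n l := \sum_(t <- bounded_trees K n l) w t.
Definition mass_below n l (j : int) :=
  \sum_(t <- bounded_trees K n l) ((max_label t < j)%R)%:R * w t.

Lemma mass0 l : mass 0 l = 2^-1.
Proof. by rewrite /mass big_seq1 rho0_weightE big_nil /= !mulr1 invr1 mulr1. Qed.

Lemma mass_below0 l j : mass_below 0 l j = ((l < j)%R)%:R * 2^-1.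
Proof. by rewrite /mass_below big_seq1 rho0_weightE big_nil /= !mulr1 invr1 mulr1. Qed.

Lemma massS n l : mass n.+1 l = geom_pgf K.+1 (mean3 (mass n) l).
Proof.
by rewrite /mass (@sum_bounded_treesS w 1) ?mul1r // => cs; rewrite rho0_weightE mul1r.
Qed.

Lemma mass_belowS n l j : mass_below n.+1 l j =
  ((l < j)%R)%:R * geom_pgf K.+1 (mean3 (mass_below n ^~ j) l).
Proof.
rewrite /mass_below (@sum_bounded_treesS _ ((l < j)%R)%:R) // => cs.
rewrite max_label_node_lt rho0_weightE.
have -> : \prod_(c <- cs) (((max_label c < j)%R)%:R * w c) =
          (all (fun c => max_label c < j) cs)%:R * \prod_(c <- cs) w c :> R.
  by elim: cs => [|c cs IH]; rewrite ?big_nil ?mul1r // !big_cons IH /=;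
    case: (_ < j); case: all; rewrite /= ?mul1r ?mul0r ?mulr0.
by case: (l < j); case: all; rewrite /= ?mul1r ?mul0r ?mulr0.
Qed.

Lemma mass_below_ge0 n l j : 0 <= mass_below n l j.
Proof. by apply: sumr_ge0 => t _; rewrite mulr_ge0 ?rho0_weight_ge0. Qed.

Lemma mass_below_le n l j : mass_below n l j <= mass n l.
Proof.
apply: ler_sum => t _; rewrite ler_piMl ?rho0_weight_ge0 //.
by case: (_ < j).
Qed.

End Rho0Sums.

Section Tail.
Variable R : realFieldType.

(* [tail (j - l)] is the probability that a tree rooted at label [l] reaches
   label [j]. *)
Definition tail (i : int) : R := if i is Posz p then 2 / (p.+1%:R * p.+2%:R) else 1.

Lemma tail_ge0 i : 0 <= tail i.
Proof. by case: i => // p; rewrite divr_ge0 // mulr_ge0. Qed.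

Lemma tail_le1 i : tail i <= 1.
Proof.
case: i => // p; rewrite /tail ler_pdivrMr ?mulr_gt0 // mul1r -natrM ler_nat; lia.
Qed.

Lemma tail_nonpos i : i <= 0 -> tail i = 1.
Proof. by case: i => // -[|p] //= _; rewrite mul1r divff. Qed.

Lemma tail_gt0_le p : tail (Posz p.+1) <= 2^-1.
Proof.
rewrite /tail ler_pdivrMr ?mulr_gt0 // -natrM.
have : (4%:R : R) <= (p.+2 * p.+3)%:R by rewrite ler_nat; lia.
lra.
Qed.

Lemma subz_gt0_succ (l j : int) : l < j -> exists p : nat, j - l = Posz p.+1.
Proof. by move=> lj; exists (`|j - l|%N.-1); lia. Qed.

(* [1 - tail] solves the fixed-point equation [u = 1 / (2 - mean3 u)] of the
   generating function [1 / (2 - s)] below the level [j]. *)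
Lemma tail_fixpoint (l j : int) : l < j ->
  tail (j - l) = 1 - (1 + mean3 (fun i => tail (j - i)) l)^-1.
Proof.
case/subz_gt0_succ => p ep; rewrite /mean3 ep.
have -> : j - (l - 1) = Posz p.+2 by lia.
have -> : j - (l + 1) = Posz p by lia.
rewrite /tail -!natr1; have x0 : 0 <= p%:R :> R by [].
by field; rewrite ![_ != 0]lt0r_neq0 //; nra.
Qed.

End Tail.

Section MassBounds.
Variables (R : realType) (K : nat).
Local Notation mass := (mass R K).
Local Notation mass_below := (mass_below R K).

Lemma mass_ge0 n l : 0 <= mass n l.
Proof. exact: le_trans (mass_below_ge0 _ _ _ _ 0) (mass_below_le _ _ _ _ 0). Qed.

Lemma mass_le1 n l : mass n l <= 1.
Proof.
elim: n l => [|n IH] l; first by rewrite mass0; lra.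
have m0 : 0 <= mean3 (mass n) l by apply: mean3_ge => i; exact: mass_ge0.
have m1 : mean3 (mass n) l <= 1 by apply: mean3_le.
rewrite massS; apply: le_trans (geom_pgf_le _ m0 m1) _.
by rewrite invf_le1; lra.
Qed.

Lemma mass_sub_mass_below_le n l j : mass n l - mass_below n l j <= tail R (j - l).
Proof.
elim: n l => [|n IH] l.
  rewrite mass0 mass_below0; case: ltP => [lj | jl].
    by rewrite mul1r subrr tail_ge0.
  by rewrite tail_nonpos ?mul0r; lra.
rewrite massS mass_belowS; case: ltP => [lj | jl]; last first.
  by rewrite mul0r subr0 -massS tail_nonpos ?mass_le1 //; lra.
rewrite mul1r (tail_fixpoint _ lj); apply: geom_pgf_sub_le.
- by apply: mean3_ge => i; exact: mass_below_ge0.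
- by rewrite ler_mean3 // => i; exact: mass_below_le.
- by apply: mean3_le => i; exact: mass_le1.
- by rewrite mean3B ler_mean3.
- by apply: mean3_le => i; exact: tail_le1.
Qed.

Lemma mass_below_le_tail n l j : mass_below n l j <= 1 - tail R (j - l).
Proof.
elim: n l => [|n IH] l.
  rewrite mass_below0; case: ltP => [lj | jl]; last by rewrite mul0r tail_nonpos; lra.
  have [p ->] := subz_gt0_succ lj; have := tail_gt0_le R p; rewrite mul1r; lra.
rewrite mass_belowS; case: ltP => [lj | jl]; last by rewrite mul0r tail_nonpos; lra.
rewrite mul1r (tail_fixpoint _ lj) opprB addrC subrK.
set A := mean3 (fun i => tail R (j - i)) l.
have A0 : 0 <= A by apply: mean3_ge => i; exact: tail_ge0.
have A1 : A <= 1 by apply: mean3_le => i; exact: tail_le1.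
have F0 : 0 <= mean3 (mass_below n ^~ j) l.
  by apply: mean3_ge => i; exact: mass_below_ge0.
have FA : mean3 (mass_below n ^~ j) l <= 1 - A.
  by rewrite -(mean3_cst 1 l) mean3B ler_mean3.
apply: le_trans (ler_geom_pgf _ F0 FA) _.
have -> : 1 + A = 2 - (1 - A) by ring.
by apply: geom_pgf_le; lra.
Qed.

Lemma mass_ge n l : n.+1%:R / n.+2%:R - n.+1%:R / 2 ^+ K.+1 <= mass n l.
Proof.
have p0 : 0 < 2 ^+ K.+1 :> R by rewrite exprn_gt0.
elim: n l => [|n IH] l.
  rewrite mass0; have : 0 <= 1%:R / 2 ^+ K.+1 :> R by rewrite divr_ge0 // ltW.
  lra.
rewrite massS; set y := n.+1%:R / n.+2%:R : R; set e := n.+1%:R / 2 ^+ K.+1 : R.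
have m0 : 0 <= mean3 (mass n) l by apply: mean3_ge => i; exact: mass_ge0.
have m1 : mean3 (mass n) l <= 1 by apply: mean3_le => i; exact: mass_le1.
have mye : y - e <= mean3 (mass n) l by apply: mean3_ge.
have e0 : 0 <= e by rewrite divr_ge0 // ltW.
have y1 : y <= 1 by rewrite ler_pdivrMr // mul1r ler_nat.
have := inv_2B_lipschitz e0 y1 m1 mye.
have := geom_pgf_ge K.+1 m0 m1.
have -> : (2 - y)^-1 = n.+2%:R / n.+3%:R.
  by rewrite /y -!natr1; field; rewrite ![_ != 0]lt0r_neq0 //; nra.
have -> : n.+2%:R / 2 ^+ K.+1 = e + (2 ^+ K.+1)^-1 :> R.
  by rewrite /e -(@natr1 R n.+1) mulrDl mul1r.
by move: (geom_pgf _ _) ((2 - _)^-1) (2 ^- _) (n.+2%:R / _) => G a b c; lra.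
Qed.

End MassBounds.

Section Rho0Tail.
Variable R : realType.
Local Notation w := (rho0_weight R).

Lemma fsbig_bounded_trees_ge K n (m : nat) :
  (\sum_(t \in [set` [seq t <- bounded_trees K n 0 | (m%:Z <= max_label t)%R]]) (w t)%:E)%E =
  (mass R K n 0 - mass_below R K n 0 m)%:E.
Proof.
rewrite -fsbig_seq ?filter_uniq ?bounded_trees_uniq // sumEFin big_filter big_mkcond.
rewrite -sumrB; congr _%:E; apply: eq_bigr => t _.
by rewrite ltNge; case: (_ <= _); rewrite /= ?mul1r ?mul0r ?subr0 ?subrr.
Qed.

Lemma prob_Delta0_ge_le (m : nat) : (prob_Delta0_ge R m <= (tail R m)%:E)%E.
Proof.
apply: ge_ereal_sup => _ [X [finX XE] <-].
have [s sX] := (finite_seqP X).1 finX; subst X.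
set N := \max_(t <- s) tree_size t.
set B := [seq t <- bounded_trees N N 0 | (m%:Z <= max_label t)%R].
apply: (@le_trans _ _ (\sum_(t \in [set` B]) (w t)%:E)%E).
  apply: lee_fsum_nneg_subset; [by apply/finite_seqP; exists s
                               | by apply/finite_seqP; exists B | |].
    move=> t; rewrite !inE /= => ts; have [[t0 vt] mt] := XE t ts.
    rewrite mem_filter mt -t0 bounded_trees_complete //.
    by apply: leqW; apply: leq_bigmax_seq.
  by move=> t _; rewrite lee_fin rho0_weight_ge0.
rewrite fsbig_bounded_trees_ge lee_fin.
by have := mass_sub_mass_below_le R N N 0 m; rewrite subr0.
Qed.

Lemma prob_Delta0_ge_ge K n (m : nat) :
  ((mass R K n 0 - mass_below R K n 0 m)%:E <= prob_Delta0_ge R m)%E.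
Proof.
rewrite -fsbig_bounded_trees_ge; apply: esum_ge.
exists [set` [seq t <- bounded_trees K n 0 | (m%:Z <= max_label t)%R]] => //.
split; first by apply/finite_seqP; eexists.
by move=> t /=; rewrite mem_filter => /andP [mt /mem_bounded_trees []].
Qed.

End Rho0Tail.

Lemma ler_of_sub_div_natS (R : archiRealFieldType) (x y : R) :
  (forall n, x - 2 / n.+1%:R <= y) -> x <= y.
Proof.
move=> xy; apply/ler_addgt0Pr => e e0; rewrite -lerBlDr.
apply: le_trans (xy (Num.Def.archi_bound (2 / e))); rewrite lerB //.
rewrite ler_pdivrMr ?ltr0n // mulrC -ler_pdivrMr //; apply: ltW.
by apply: lt_le_trans (archi_boundP _) _; rewrite ?ler_nat ?divr_ge0 // ltW.
Qed.

Lemma sqrS_leq_exp2 n : (n.+1 * n.+1 <= 2 ^ (2 * n).+1)%N.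
Proof.
elim: n => // n IH.
have -> : (2 * n.+1).+1 = ((2 * n).+1 + 2)%N by lia.
rewrite expnD; nia.
Qed.

Lemma mass_defect_le (R : realFieldType) n :
  1 - (n.+1%:R / n.+2%:R - n.+1%:R / 2 ^+ (2 * n).+1) <= 2 / n.+1%:R :> R.
Proof.
have -> : 1 - (n.+1%:R / n.+2%:R - n.+1%:R / 2 ^+ (2 * n).+1) =
    (n.+2%:R)^-1 + n.+1%:R / 2 ^+ (2 * n).+1 :> R.
  have n0 : 0 <= n%:R :> R by [].
  rewrite -(@natr1 R n.+1); field; rewrite expf_neq0 ?pnatr_eq0 //= lt0r_neq0 //; lra.
have -> : 2 / n.+1%:R = (n.+1%:R)^-1 + (n.+1%:R)^-1 :> R by field.
rewrite lerD //.
  by rewrite lef_pV2 ?posrE ?ltr0n // ler_nat.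
rewrite ler_pdivrMr ?exprn_gt0 // -[X in X <= _](mulKf (x := n.+1%:R)) ?pnatr_eq0 //.
by rewrite ler_wpM2l ?invr_ge0 // -natrM -natrX ler_nat sqrS_leq_exp2.
Qed.

Lemma prob_Delta0_geE (R : realType) (m : nat) : prob_Delta0_ge R m = (tail R m)%:E.
Proof.
have lb n : ((tail R m - 2 / n.+1%:R)%:E <= prob_Delta0_ge R m)%E.
  apply: le_trans (prob_Delta0_ge_ge R (2 * n) n m); rewrite lee_fin.
  have := mass_ge R (2 * n) n 0; have := mass_below_le_tail R (2 * n) n 0 m.
  have := mass_defect_le R n; rewrite subr0.
  by move: (n.+1%:R / _ - _) (2 / _) => c d; lra.
have ub := prob_Delta0_ge_le R m.
move: ub lb (lb 0%N); case: prob_Delta0_ge => [v| |] //= ub lb _.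
rewrite lee_fin in ub; congr _%:E; apply/le_anti; rewrite ub /=.
by apply: ler_of_sub_div_natS => n; rewrite -lee_fin.
Qed.

Lemma cvg_tail_ratio (R : realType) :
  (fun m : nat => tail R m / (2 / (m%:R ^+ 2))) @ \oo --> (1 : R).
Proof.
apply/cvgrPdist_le => e e0.
exists (Num.Def.archi_bound (3 / e)).+1 => // m /= hm.
have m0 : 0 < m%:R :> R by rewrite ltr0n; lia.
have d0 : 0 < m.+1%:R * m.+2%:R :> R by rewrite mulr_gt0 ?ltr0n.
have -> : 1 - tail R m / (2 / m%:R ^+ 2) = (3 * m%:R + 2) / (m.+1%:R * m.+2%:R).
  by rewrite /tail -!natr1; field; rewrite ![_ != 0]lt0r_neq0 //; lra.
rewrite ger0_norm; last by rewrite divr_ge0 ?ltW //; lra.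
apply: (le_trans (y := 3 / m.+1%:R)).
  rewrite ler_pdivrMr // mulrCA.
  have -> : m.+1%:R * (3 / m.+1%:R * m.+2%:R) = 3 * m.+2%:R :> R by field.
  rewrite -natr1; lra.
rewrite ler_pdivrMr ?ltr0n // mulrC -ler_pdivrMr //.
apply: le_trans (ltW (archi_boundP _)) _; last by rewrite ler_nat leqW // ltnW.
by rewrite divr_ge0 // ltW.
Qed.

Theorem lemma5 (R : realType) :
  (fun m : nat => fine (prob_Delta0_ge R m) / (2 / (m%:R ^+ 2))) @ \oo --> (1 : R).
Proof.
under eq_fun do rewrite prob_Delta0_geE /=.
exact: cvg_tail_ratio.
Qed.
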